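(* The capacity region $\mathcal{C}_D$ of the deterministic many-to-one interference channel with gains $n_{ii}$ ($0\le i\le K$) and $n_{0i}$ ($1\le i\le K$) is contained in the set $\overline{\mathcal{C}}$ of nonnegative rate tuples $(r_0,\dots,r_K)$ satisfying the individual rate constraints $$r_i\le n_{ii},\qquad 0\le i\le K,$$ and the $2^K-1$ sum-rate constraints $$r_0+\sum_{i\in S}r_i\le f_{\rm free}(S)+\sum_{k=1}^{n_{00}}f_k(S),\qquad \varnothing\neq S\subseteq\{1,\dots,K\}.$$
   Context: Deterministic many-to-one interference channel: there are $K+1$ users $0,1,\dots,K$ with nonnegative integer gains $n_{ii}$ ($0\le i\le K$) and $n_{0i}$ ($1\le i\le K$); let $q=\max$ of all these gains. At each time the input of user $i$ is $x_i\in\mathbb{F}_2^q$, the outputs are $y_0=\sum_{j=0}^K \mathbf{S}^{q-n_{0j}}x_j$ (with $n_{00}$ the direct gain of user 0) and $y_i=\mathbf{S}^{q-n_{ii}}x_i$ for $1\le i\le K$, where arithmetic is over $\mathbb{F}_2$ and $\mathbf S$ is the $q\times q$ down-shift matrix (ones on the subdiagonal, zeros elsewhere). Each transmitter $i$ has an independent uniformly distributed message to be decoded by receiver $i$; the capacity region is the closure of the set of rate tuples (bits per channel use) for which the error probabilities can be made to vanish. Notation: $(a)^+=\max(a,0)$. For $1\le k\le n_{00}$ let $U_k=\{i:1\le i\le K,\ n_{0i}-n_{ii}<k\le n_{0i}\}$ (the users interfering at level $k$ of receiver 0). For $S\subseteq\{1,\dots,K\}$ let $f_k(S)=\max(|U_k\cap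 S|,1)$, $f_{\rm free}(i)=(n_{ii}-n_{0i})^+ +(n_{0i}-n_{00})^+$ and $f_{\rm free}(S)=\sum_{i\in S}f_{\rm free}(i)$. *)

From Stdlib Require Import Reals Lra Lia Arith List.
Import ListNotations.
Open Scope R_scope.

(* Gains: [d i] = n_ii for 0 <= i <= K ; [c i] = n_0i for 1 <= i <= K. *)

Definition users (K : nat) : list nat := seq 1 K.
Definition all_users (K : nat) : list nat := seq 0 (S K).

Definition qmax (K : nat) (d c : nat -> nat) : nat :=
  Nat.max (fold_right Nat.max 0%nat (map d (all_users K)))
          (fold_right Nat.max 0%nat (map c (users K))).

Definition g0 (d c : nat -> nat) (u : nat) : nat :=
  match u with O => d O | _ => c u end.

(* Vectors in F_2^q are modelled as functions [nat -> bool] (coordinate j, 0 <= j < q);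
   coordinates >= q are ignored.  (S^m x)_j = x_(j-m) if m <= j, 0 otherwise. *)
Definition shiftbit (m : nat) (x : nat -> bool) (j : nat) : bool :=
  if Nat.leb m j then x (j - m)%nat else false.

Record Code := mkCode {
  msz : nat -> nat;
  enc : nat -> nat -> nat -> nat -> bool;  (* enc i w t j : bit at level j, time t, of user i sending w *)
  dec : nat -> (nat -> nat -> bool) -> nat (* dec i y : receiver i's estimate from its output sequence y t j *)
}.

Definition out0 (K : nat) (d c : nat -> nat) (N : nat) (C : Code) (w : nat -> nat)
  : nat -> nat -> bool :=
  fun t j =>
    if andb (Nat.ltb t N) (Nat.ltb j (qmax K d c)) then
      fold_right xorb false
        (map (fun u => shiftbit (qmax K d c - g0 d c u) (enc C u (w u) t) j) (all_users K))
    else false.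

Definition outi (K : nat) (d c : nat -> nat) (N : nat) (C : Code) (i : nat) (w : nat -> nat)
  : nat -> nat -> bool :=
  fun t j =>
    if andb (Nat.ltb t N) (Nat.ltb j (qmax K d c)) then
      shiftbit (qmax K d c - d i) (enc C i (w i) t) j
    else false.

Definition output (K : nat) (d c : nat -> nat) (N : nat) (C : Code) (i : nat) (w : nat -> nat)
  : nat -> nat -> bool :=
  match i with O => out0 K d c N C w | _ => outi K d c N C i w end.

Fixpoint tuples (l : list nat) : list (list nat) :=
  match l with
  | [] => [[]]
  | m :: l' => flat_map (fun a => map (cons a) (tuples l')) (seq 0 m)
  end.

Definition msgs (K : nat) (C : Code) : list (list nat) :=
  tuples (map (msz C) (all_users K)).

Definition is_error (K : nat) (d c : nat -> nat) (N : nat) (C : Code) (w : list nat) : bool :=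
  existsb (fun u => negb (Nat.eqb (dec C u (output K d c N C u (fun v => nth v w 0%nat)))
                                  (nth u w 0%nat)))
          (all_users K).

(* Error probability for independent uniformly distributed messages:
   P(some receiver decodes its message incorrectly). *)
Definition Perr (K : nat) (d c : nat -> nat) (N : nat) (C : Code) : R :=
  INR (length (filter (is_error K d c N C) (msgs K C))) / INR (length (msgs K C)).

Definition achievable (K : nat) (d c : nat -> nat) (r : nat -> R) : Prop :=
  (forall i, (i <= K)%nat -> 0 <= r i) /\
  exists code : nat -> Code,
    (forall N i, (i <= K)%nat -> Rpower 2 (INR N * r i) <= INR (msz (code N) i)) /\
    Un_cv (fun N => Perr K d c N (code N)) 0.

Definition capacity_region (K : nat) (d c : nat -> nat) (r : nat -> R) : Prop :=
  forall eps, 0 < eps ->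
    exists r', achievable K d c r' /\ forall i, (i <= K)%nat -> Rabs (r i - r' i) < eps.

(* U_k membership: n_0i - n_ii < k <= n_0i (integer inequality) *)
Definition inU (d c : nat -> nat) (k i : nat) : bool :=
  andb (Nat.ltb (c i) (k + d i)) (Nat.leb k (c i)).

Definition fk (K : nat) (d c : nat -> nat) (S : nat -> bool) (k : nat) : nat :=
  Nat.max (length (filter (fun i => andb (S i) (inU d c k i)) (users K))) 1.

(* f_free(i) = (n_ii - n_0i)^+ + (n_0i - n_00)^+  (truncated subtraction = (.)^+) *)
Definition ffree1 (d c : nat -> nat) (i : nat) : nat :=
  (d i - c i + (c i - d O))%nat.

Definition ffree (K : nat) (d c : nat -> nat) (S : nat -> bool) : nat :=
  fold_right Nat.add 0%nat (map (ffree1 d c) (filter S (users K))).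

Definition sum_fk (K : nat) (d c : nat -> nat) (S : nat -> bool) : nat :=
  fold_right Nat.add 0%nat (map (fk K d c S) (seq 1 (d O))).

Definition rate_sum (K : nat) (S : nat -> bool) (r : nat -> R) : R :=
  fold_right Rplus 0 (map r (filter S (users K))).

Definition outer_region (K : nat) (d c : nat -> nat) (r : nat -> R) : Prop :=
  (forall i, (i <= K)%nat -> 0 <= r i /\ r i <= INR (d i)) /\
  (forall S : nat -> bool, (exists i, In i (users K) /\ S i = true) ->
     r O + rate_sum K S r <= INR (ffree K d c S + sum_fk K d c S)).

(** The proof is a counting ("genie") argument.  Fix a block code and a set
   [P] of users, and suppose a genie that knows the messages of the users
   outside [P] and a list of [n] bits of the transmitted or received signals
   can tell apart all correctly decoded message tuples.  Then there are at
   most (#message tuples outside [P]) * 2^n such tuples, that is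
   (#message tuples inside [P]) * (1 - Perr) <= 2^n  ([genie_bound]).
   - For [r_i <= n_ii] the genie reveals the [n_ii] input bits of user [i]
     seen by receiver [i] ([own_bits_genie]).
   - For the sum bound it reveals the [n_00] levels of [y_0] occupied by
     user 0, all but one of the users of [S] interfering at each such level,
     and the free bits of the users in [S]; the messages are then recovered
     by decoding user 0 and peeling the levels of [y_0] one at a time
     ([sum_genie]).
   Letting the block length grow while [Perr -> 0] turns these inequalities
   into rate bounds ([rate_le_of_counting]), and an epsilon argument passes
   from achievable rates to the closure of the achievable region. *)

From Stdlib Require Import Reals Lra Lia Arith List FunctionalExtensionality.
Import ListNotations.
Open Scope nat_scope.

(** ** Finite counting *)

Definition prodl (l : list nat) : nat := fold_right Nat.mul 1 l.

Lemma prodl_ge1 (l : list nat) : (forall x, In x l -> 1 <= x) -> 1 <= prodl l.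
Proof.
  induction l as [|x l IH]; simpl; intros H; auto.
  specialize (IH (fun y Hy => H y (or_intror Hy))). specialize (H x (or_introl eq_refl)). nia.
Qed.

Lemma prodl_split (f : nat -> nat) (P : nat -> bool) (l : list nat) :
  prodl (map f l) = prodl (map (fun u => if P u then f u else 1) l) *
                    prodl (map (fun u => if P u then 1 else f u) l).
Proof. induction l as [|u l IH]; simpl; auto. rewrite IH. destruct (P u); lia. Qed.

Fixpoint bitstrings (n : nat) : list (list bool) :=
  match n with
  | O => [[]]
  | S n => map (cons true) (bitstrings n) ++ map (cons false) (bitstrings n)
  end.

Lemma bitstrings_length (n : nat) : length (bitstrings n) = 2 ^ n.
Proof. induction n; simpl; auto. rewrite length_app, !length_map. lia. Qed.

Lemma bitstrings_complete (n : nat) (bs : list bool) : length bs = n -> In bs (bitstrings n).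
Proof.
  revert bs; induction n; intros [|b bs] H; simpl in *; try lia; auto.
  apply in_app_iff. destruct b; [left|right]; apply in_map, IHn; lia.
Qed.

Lemma tuples_length (l : list nat) : length (tuples l) = prodl l.
Proof.
  induction l as [|m l IH]; simpl; auto.
  rewrite (flat_map_constant_length (c := prodl l)), length_seq; auto.
  intros a _. rewrite length_map; auto.
Qed.

Lemma tuples_spec (l w : list nat) : In w (tuples l) <->
  length w = length l /\ forall k, k < length l -> nth k w 0 < nth k l 0.
Proof.
  revert w; induction l as [|m l IH]; intros w; simpl.
  - split.
    + intros [<-|[]]; split; auto; intros; lia.
    + intros [H _]; destruct w; simpl in *; try lia; auto.
  - rewrite in_flat_map. split.
    + intros [a [Ha Hw]]. apply in_map_iff in Hw. destruct Hw as [w' [<- Hw']].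
      apply IH in Hw'. apply in_seq in Ha. destruct Hw' as [H1 H2].
      simpl; split; [lia|]. intros [|k] Hk; simpl; [lia|]. apply H2; lia.
    + intros [H1 H2]. destruct w as [|a w]; simpl in H1; try lia.
      exists a; split.
      * apply in_seq. specialize (H2 0). simpl in H2. lia.
      * apply in_map, IH. split; [lia|]. intros k Hk. apply (H2 (S k)); lia.
Qed.

Lemma tuples_NoDup (l : list nat) : NoDup (tuples l).
Proof.
  induction l as [|m l IH]; simpl; [repeat constructor; auto|].
  generalize (seq_NoDup m 0). generalize (seq 0 m). intros s Hs.
  induction Hs as [|x s Hx Hs IHs]; simpl; [constructor|].
  apply NoDup_app; auto.
  - apply NoDup_map_NoDup_ForallPairs; auto. intros a b _ _ He; inversion He; auto.
  - intros y Hy Hy2. apply in_map_iff in Hy. destruct Hy as [y' [<- _]].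
    apply in_flat_map in Hy2. destruct Hy2 as [x' [Hx' Hy2]].
    apply in_map_iff in Hy2. destruct Hy2 as [z [Hz _]]. inversion Hz; subst. auto.
Qed.

Lemma injective_count {A X : Type} (l : list A) (good : A -> bool) (key : A -> X) (T : list X) :
  NoDup l ->
  (forall a b, In a l -> In b l -> good a = true -> good b = true -> key a = key b -> a = b) ->
  (forall a, In a l -> good a = true -> In (key a) T) ->
  length (filter good l) <= length T.
Proof.
  intros Hn Hinj Hin. rewrite <- (length_map key).
  apply NoDup_incl_length.
  - apply NoDup_map_NoDup_ForallPairs; [|apply NoDup_filter; auto].
    intros a b Ha Hb. apply filter_In in Ha, Hb. apply Hinj; tauto.
  - intros y Hy. apply in_map_iff in Hy. destruct Hy as [a [<- Ha]].
    apply filter_In in Ha. apply Hin; tauto.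
Qed.

Lemma nth_map_seq0 {A : Type} (f : nat -> A) (n k : nat) (x : A) :
  k < n -> nth k (map f (seq 0 n)) x = f k.
Proof.
  intros Hk. rewrite nth_indep with (d' := f 0) by (rewrite length_map, length_seq; lia).
  rewrite map_nth, seq_nth by lia. auto.
Qed.

Lemma filter_eqb_single (l : list nat) (i : nat) :
  NoDup l -> In i l -> filter (fun u => u =? i) l = [i].
Proof.
  induction 1 as [|x l Hx Hn IH]; simpl; intros Hi; [contradiction|].
  destruct Hi as [->|Hi].
  - rewrite Nat.eqb_refl. f_equal. clear IH. induction l as [|y l IHl]; simpl; auto.
    destruct (Nat.eqb_spec y i); [subst; simpl in Hx; tauto|].
    apply IHl; [intro; apply Hx; right; auto | inversion Hn; auto].
  - destruct (Nat.eqb_spec x i); [subst; contradiction | auto].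
Qed.

Lemma xor_cancel {A : Type} (f g : A -> bool) (l : list A) (u : A) :
  NoDup l -> In u l -> (forall x, In x l -> x <> u -> f x = g x) ->
  fold_right xorb false (map f l) = fold_right xorb false (map g l) -> f u = g u.
Proof.
  intros Hn0; induction Hn0 as [|x l Hx Hn IH]; simpl; intros Hu Hfg Heq; [contradiction|].
  destruct Hu as [->|Hu].
  - assert (E : map f l = map g l).
    { apply map_ext_in. intros a Ha. apply Hfg; auto. intro; subst; contradiction. }
    rewrite E in Heq.
    destruct (f u), (g u), (fold_right xorb false (map g l)); simpl in *; congruence.
  - assert (Hxu : x <> u) by (intro; subst; contradiction).
    rewrite (Hfg x (or_introl eq_refl) Hxu) in Heq.
    apply IH; auto.
    destruct (g x), (fold_right xorb false (map f l)), (fold_right xorb false (map g l));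
      simpl in *; congruence.
Qed.

Definition msg_of (w : list nat) : nat -> nat := fun v => nth v w 0.

Lemma msgs_length (K : nat) (C : Code) (a : list nat) : In a (msgs K C) -> length a = S K.
Proof.
  unfold msgs. intros H. apply tuples_spec in H. destruct H as [H _].
  unfold all_users in H. rewrite H, length_map, length_seq. auto.
Qed.

Lemma msgs_bound (K : nat) (C : Code) (a : list nat) (u : nat) :
  In a (msgs K C) -> u <= K -> nth u a 0 < msz C u.
Proof.
  unfold msgs, all_users. intros H Hu. apply tuples_spec in H. destruct H as [_ H].
  rewrite length_map, length_seq in H. specialize (H u ltac:(lia)).
  rewrite nth_map_seq0 in H by lia. auto.
Qed.

Lemma msgs_ext (K : nat) (C : Code) (a b : list nat) : In a (msgs K C) -> In b (msgs K C) ->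
  (forall u, u <= K -> nth u a 0 = nth u b 0) -> a = b.
Proof.
  intros Ha Hb H. apply nth_ext with (d := 0) (d' := 0).
  - rewrite (msgs_length _ _ _ Ha), (msgs_length _ _ _ Hb); auto.
  - intros n Hn. rewrite (msgs_length _ _ _ Ha) in Hn. apply H; lia.
Qed.

(** [w] with the messages of the users in [P] erased: the part the genie knows. *)
Definition erase (P : nat -> bool) (K : nat) (w : list nat) : list nat :=
  map (fun u => if P u then 0 else nth u w 0) (all_users K).

Lemma erase_agree (P : nat -> bool) (K : nat) (a b : list nat) (u : nat) :
  erase P K a = erase P K b -> u <= K -> P u = false -> nth u a 0 = nth u b 0.
Proof.
  intros H Hu Hp. assert (Hin : In u (all_users K)) by (apply in_seq; lia).
  pose proof (proj1 map_ext_in_iff H u Hin) as E. simpl in E. rewrite Hp in E. auto.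
Qed.

Definition outside_sizes (P : nat -> bool) (K : nat) (C : Code) : list nat :=
  map (fun u => if P u then 1 else msz C u) (all_users K).

Definition inside_size (P : nat -> bool) (K : nat) (C : Code) : nat :=
  prodl (map (fun u => if P u then msz C u else 1) (all_users K)).

Lemma erase_in (P : nat -> bool) (K : nat) (C : Code) (a : list nat) :
  In a (msgs K C) -> In (erase P K a) (tuples (outside_sizes P K C)).
Proof.
  intros Ha. apply tuples_spec. unfold erase, outside_sizes, all_users.
  rewrite !length_map. split; auto.
  intros k Hk. rewrite length_seq in Hk. rewrite !nth_map_seq0 by lia.
  destruct (P k); auto. apply (msgs_bound K); auto; lia.
Qed.

Lemma msgs_count_split (P : nat -> bool) (K : nat) (C : Code) :
  length (msgs K C) = inside_size P K C * prodl (outside_sizes P K C).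
Proof. unfold msgs. rewrite tuples_length. apply prodl_split. Qed.

(** ** The genie bound *)

(** What the genie may reveal: level [j] of receiver 0's output at time [t],
    or input bit [m] of user [u] at time [t]. *)
Inductive probe := Level0 (t j : nat) | InBit (u t m : nat).

Definition reveal (K : nat) (d c : nat -> nat) (N : nat) (C : Code) (w : list nat) (x : probe)
  : bool :=
  match x with
  | Level0 t j => out0 K d c N C (msg_of w) t j
  | InBit u t m => enc C u (nth u w 0) t m
  end.

Definition genie_identifies (K : nat) (d c : nat -> nat) (N : nat) (C : Code)
  (P : nat -> bool) (I : list probe) : Prop :=
  forall a b, In a (msgs K C) -> In b (msgs K C) ->
    is_error K d c N C a = false -> is_error K d c N C b = false ->
    erase P K a = erase P K b ->
    (forall x, In x I -> reveal K d c N C a x = reveal K d c N C b x) -> a = b.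

Lemma genie_count (K : nat) (d c : nat -> nat) (N : nat) (C : Code) (P : nat -> bool)
  (I : list probe) :
  genie_identifies K d c N C P I ->
  length (filter (fun w => negb (is_error K d c N C w)) (msgs K C))
    <= prodl (outside_sizes P K C) * 2 ^ length I.
Proof.
  intros Hinj.
  rewrite <- bitstrings_length, <- tuples_length, <- length_prod.
  apply injective_count with (key := fun w => (erase P K w, map (reveal K d c N C w) I)).
  - apply tuples_NoDup.
  - intros a b Ha Hb Ga Gb Hk. apply Hinj; auto.
    + destruct (is_error K d c N C a); auto; discriminate.
    + destruct (is_error K d c N C b); auto; discriminate.
    + exact (f_equal fst Hk).
    + apply map_ext_in_iff. exact (f_equal snd Hk).
  - intros a Ha _. apply in_prod; [apply erase_in; auto|].
    apply bitstrings_complete, length_map.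
Qed.

Open Scope R_scope.

Lemma genie_bound (K : nat) (d c : nat -> nat) (N : nat) (C : Code) (P : nat -> bool)
  (I : list probe) :
  (forall u, (u <= K)%nat -> (1 <= msz C u)%nat) ->
  genie_identifies K d c N C P I ->
  INR (inside_size P K C) * (1 - Perr K d c N C) <= 2 ^ length I.
Proof.
  intros Hm Hinj. unfold Perr.
  pose proof (genie_count K d c N C P I Hinj) as Hc.
  pose proof (filter_length (is_error K d c N C) (msgs K C)) as Hsplit.
  rewrite (msgs_count_split P) in *.
  set (G := length (filter (fun w => negb (is_error K d c N C w)) (msgs K C))) in *.
  set (E := length (filter (is_error K d c N C) (msgs K C))) in *.
  set (Min := inside_size P K C) in *.
  set (Mout := prodl (outside_sizes P K C)) in *.
  assert (Hout : (1 <= Mout)%nat).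
  { apply prodl_ge1. intros x Hx. unfold outside_sizes in Hx. apply in_map_iff in Hx.
    destruct Hx as [u [<- Hu]]. apply in_seq in Hu. destruct (P u); auto. apply Hm; lia. }
  assert (Hin : (1 <= Min)%nat).
  { apply prodl_ge1. intros x Hx. apply in_map_iff in Hx.
    destruct Hx as [u [<- Hu]]. apply in_seq in Hu. destruct (P u); auto. apply Hm; lia. }
  assert (HEG : INR E + INR G = INR Min * INR Mout)
    by (rewrite <- plus_INR, <- mult_INR; f_equal; lia).
  apply le_INR in Hc, Hout, Hin. simpl in Hout, Hin.
  rewrite mult_INR, pow_INR in Hc. replace (INR 2) with 2 in Hc by (simpl; lra).
  rewrite mult_INR.
  replace (INR Min * (1 - INR E / (INR Min * INR Mout))) with (INR G / INR Mout)
    by (replace (INR G) with (INR Min * INR Mout - INR E) by lra; field; lra).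
  apply Rmult_le_reg_r with (INR Mout); [lra|].
  unfold Rdiv. rewrite Rmult_assoc, Rinv_l, Rmult_1_r, Rmult_comm by lra. exact Hc.
Qed.

Open Scope nat_scope.

(** ** The channel *)

Lemma fold_max_ge (x : nat) (l : list nat) : In x l -> x <= fold_right Nat.max 0 l.
Proof.
  induction l as [|y l IH]; simpl; intros Hx; [contradiction|].
  destruct Hx as [<-|Hx]; [lia | specialize (IH Hx); lia].
Qed.

Lemma qmax_ge_d0 (K : nat) (d c : nat -> nat) : d 0 <= qmax K d c.
Proof.
  unfold qmax. assert (d 0 <= fold_right Nat.max 0 (map d (all_users K))).
  { apply fold_max_ge, in_map, in_seq. lia. }
  lia.
Qed.

Lemma qmax_ge_c (K : nat) (d c : nat -> nat) (u : nat) : 1 <= u <= K -> c u <= qmax K d c.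
Proof.
  intros H. unfold qmax. assert (c u <= fold_right Nat.max 0 (map c (users K))).
  { apply fold_max_ge, in_map, in_seq. lia. }
  lia.
Qed.

Section Channel.
Variables (K : nat) (d c : nat -> nat) (N : nat) (C : Code).

Lemma decoded_correctly (a : list nat) (u : nat) :
  is_error K d c N C a = false -> u <= K ->
  dec C u (output K d c N C u (msg_of a)) = nth u a 0.
Proof.
  unfold is_error. intros H Hu.
  destruct (Nat.eqb_spec (dec C u (output K d c N C u (msg_of a))) (nth u a 0)) as [E|E]; auto.
  exfalso. apply Bool.not_true_iff_false in H. apply H, existsb_exists.
  exists u. split; [apply in_seq; lia|]. apply Bool.negb_true_iff, Nat.eqb_neq. exact E.
Qed.

Lemma output_user_det (i : nat) (a b : list nat) : 1 <= i ->
  (forall t m, t < N -> m < d i -> enc C i (nth i a 0) t m = enc C i (nth i b 0) t m) ->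
  output K d c N C i (msg_of a) = output K d c N C i (msg_of b).
Proof.
  intros Hi H. destruct i as [|i]; [lia|]. simpl. unfold outi, msg_of.
  apply functional_extensionality; intro t. apply functional_extensionality; intro j.
  destruct (Nat.ltb_spec t N); simpl; auto.
  destruct (Nat.ltb_spec j (qmax K d c)); simpl; auto.
  unfold shiftbit. destruct (Nat.leb_spec (qmax K d c - d (S i)) j); auto.
  apply H; lia.
Qed.

Lemma output0_det (a b : list nat) :
  (forall u t m, u <= K -> t < N -> m < g0 d c u ->
     enc C u (nth u a 0) t m = enc C u (nth u b 0) t m) ->
  output K d c N C 0 (msg_of a) = output K d c N C 0 (msg_of b).
Proof.
  intros H. unfold output, out0, msg_of.
  apply functional_extensionality; intro t. apply functional_extensionality; intro j.
  destruct (Nat.ltb_spec t N); cbn [andb]; auto.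
  destruct (Nat.ltb_spec j (qmax K d c)); cbn [andb]; auto.
  f_equal. apply map_ext_in. intros u Hu. apply in_seq in Hu. unfold shiftbit.
  destruct (Nat.leb_spec (qmax K d c - g0 d c u) j); auto.
  apply H; lia.
Qed.

Lemma decode_user (u : nat) (a b : list nat) : 1 <= u <= K ->
  is_error K d c N C a = false -> is_error K d c N C b = false ->
  (forall t m, t < N -> m < d u -> enc C u (nth u a 0) t m = enc C u (nth u b 0) t m) ->
  nth u a 0 = nth u b 0.
Proof.
  intros Hu Ea Eb H.
  rewrite <- (decoded_correctly a u), <- (decoded_correctly b u); auto; try lia.
  f_equal. apply output_user_det; auto; lia.
Qed.

(** ** The individual bound: the genie reveals what receiver [i] sees of user [i] *)

Definition own_bits (i : nat) : list probe :=
  flat_map (fun t => map (InBit i t) (seq 0 (d i))) (seq 0 N).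

Lemma own_bits_length (i : nat) : length (own_bits i) = N * d i.
Proof.
  unfold own_bits. rewrite (flat_map_constant_length (c := d i)), length_seq; auto.
  intros; rewrite length_map, length_seq; auto.
Qed.

Lemma own_bits_genie (i : nat) : i <= K ->
  genie_identifies K d c N C (fun u => u =? i) (own_bits i).
Proof.
  intros Hi a b Ha Hb Ea Eb Hout Hrev.
  assert (Hbits : forall t m, t < N -> m < d i ->
            enc C i (nth i a 0) t m = enc C i (nth i b 0) t m).
  { intros t m Ht Hm. apply (Hrev (InBit i t m)).
    apply in_flat_map. exists t. split; [apply in_seq; lia|].
    apply in_map, in_seq. lia. }
  assert (Hothers : forall u, u <= K -> u <> i -> nth u a 0 = nth u b 0).
  { intros u Hu Hne. apply (erase_agree (fun u => u =? i) K); auto. apply Nat.eqb_neq; auto. }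
  assert (Hown : nth i a 0 = nth i b 0).
  { destruct i as [|i].
    - rewrite <- (decoded_correctly a 0), <- (decoded_correctly b 0); auto; try lia.
      f_equal. apply output0_det. intros u t m Hu Ht Hm.
      destruct (Nat.eq_dec u 0) as [->|Hne]; [apply Hbits; auto|].
      rewrite (Hothers u); auto.
    - apply decode_user; auto; lia. }
  apply (msgs_ext K C); auto. intros u Hu.
  destruct (Nat.eq_dec u i) as [->|]; auto.
Qed.

End Channel.

(** ** The sum bound: what the genie reveals *)

Definition interferers (K : nat) (d c : nat -> nat) (S : nat -> bool) (k : nat) : list nat :=
  filter (fun i => andb (S i) (inU d c k i)) (users K).

(** The free input bits of user [u]: those reaching receiver 0 outside the
    levels of user 0 (below [c u - d 0]) and those invisible at receiver 0
    but seen by receiver [u] (from [c u] to [d u - 1]). *)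
Definition free_bits (d c : nat -> nat) (u : nat) : list nat :=
  seq 0 (c u - d 0) ++ seq (c u) (d u - c u).

Definition sum_probes_at (K : nat) (d c : nat -> nat) (S : nat -> bool) (t : nat)
  : list probe :=
  map (fun L => Level0 t (qmax K d c - L)) (seq 1 (d 0)) ++
  flat_map (fun L => map (fun u => InBit u t (c u - L)) (tl (interferers K d c S L)))
    (seq 1 (d 0)) ++
  flat_map (fun u => map (InBit u t) (free_bits d c u)) (filter S (users K)).

Definition sum_probes (K : nat) (d c : nat -> nat) (S : nat -> bool) (N : nat) : list probe :=
  flat_map (sum_probes_at K d c S) (seq 0 N).

Lemma sum_max1 {A : Type} (x : A -> nat) (l : list A) :
  list_sum (map (fun L => Nat.max (x L) 1) l) = length l + list_sum (map (fun L => x L - 1) l).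
Proof. induction l; simpl; auto. rewrite IHl. lia. Qed.

Lemma sum_probes_length (K : nat) (d c : nat -> nat) (S : nat -> bool) (N : nat) :
  length (sum_probes K d c S N) = N * (ffree K d c S + sum_fk K d c S).
Proof.
  unfold sum_probes. rewrite (flat_map_constant_length (c := ffree K d c S + sum_fk K d c S)).
  { rewrite length_seq; auto. }
  intros t _. unfold sum_probes_at.
  rewrite !length_app, length_map, length_seq, !length_flat_map.
  unfold sum_fk, fk, ffree. change (fold_right Nat.add 0) with list_sum.
  rewrite sum_max1, length_seq.
  rewrite (map_ext _ (fun L => length (interferers K d c S L) - 1))
    by (intros L; rewrite length_map, length_tl; auto).
  rewrite (map_ext (fun u => length (map (InBit u t) (free_bits d c u))) (ffree1 d c))
    by (intros u; rewrite length_map; unfold free_bits, ffree1;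
        rewrite length_app, !length_seq; lia).
  unfold interferers. lia.
Qed.

Definition with0 (S : nat -> bool) (u : nat) : bool := orb (u =? 0) (S u).

Section SumGenie.
Variables (K : nat) (d c : nat -> nat) (N : nat) (C : Code) (S : nat -> bool) (a b : list nat).
Hypotheses (Ha : In a (msgs K C)) (Hb : In b (msgs K C))
  (Ea : is_error K d c N C a = false) (Eb : is_error K d c N C b = false)
  (Hout : erase (with0 S) K a = erase (with0 S) K b)
  (Hrev : forall x, In x (sum_probes K d c S N) -> reveal K d c N C a x = reveal K d c N C b x).

Local Notation q := (qmax K d c).

Definition bit_agrees (u m : nat) : Prop :=
  forall t, t < N -> enc C u (nth u a 0) t m = enc C u (nth u b 0) t m.

Lemma outside_agree (u : nat) : 1 <= u <= K -> S u = false -> nth u a 0 = nth u b 0.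
Proof.
  intros Hu Hs. apply (erase_agree (with0 S) K); auto; try lia.
  unfold with0. rewrite Hs. destruct u; simpl; auto; lia.
Qed.

Lemma revealed_at (t : nat) (x : probe) : t < N -> In x (sum_probes_at K d c S t) ->
  reveal K d c N C a x = reveal K d c N C b x.
Proof. intros Ht Hx. apply Hrev, in_flat_map. exists t. split; auto. apply in_seq. lia. Qed.

Lemma revealed_level0 (t L : nat) : t < N -> 1 <= L <= d 0 ->
  out0 K d c N C (msg_of a) t (q - L) = out0 K d c N C (msg_of b) t (q - L).
Proof.
  intros Ht HL. apply (revealed_at t (Level0 t (q - L))); auto.
  apply in_app_iff; left. apply (in_map (fun L => Level0 t (q - L))), in_seq. lia.
Qed.

Lemma revealed_interferer (L u : nat) : 1 <= L <= d 0 ->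
  In u (tl (interferers K d c S L)) -> bit_agrees u (c u - L).
Proof.
  intros HL Hu t Ht. apply (revealed_at t (InBit u t (c u - L))); auto.
  apply in_app_iff; right. apply in_app_iff; left. apply in_flat_map. exists L.
  split; [apply in_seq; lia|]. apply (in_map (fun u => InBit u t (c u - L))); auto.
Qed.

Lemma revealed_free (u m : nat) : 1 <= u <= K -> S u = true -> In m (free_bits d c u) ->
  bit_agrees u m.
Proof.
  intros Hu Hs Hm t Ht. apply (revealed_at t (InBit u t m)); auto.
  apply in_app_iff; right. apply in_app_iff; right. apply in_flat_map. exists u.
  split; [apply filter_In; split; auto; apply in_seq; lia|]. apply in_map; auto.
Qed.

(** Receiver 0 gets the same output: its top [d 0] levels are revealed, and
    below them only free bits and the known users outside [S] are seen. *)
Lemma receiver0_output_agree : output K d c N C 0 (msg_of a) = output K d c N C 0 (msg_of b).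
Proof.
  unfold output.
  apply functional_extensionality; intro t. apply functional_extensionality; intro j.
  destruct (Nat.ltb_spec t N) as [Ht|Ht]; [|unfold out0; rewrite (proj2 (Nat.ltb_ge _ _) Ht); auto].
  destruct (Nat.ltb_spec j q) as [Hj|Hj];
    [|unfold out0; rewrite (proj2 (Nat.ltb_ge _ _) Hj), Bool.andb_false_r; auto].
  pose proof (qmax_ge_d0 K d c) as Hd0.
  destruct (Nat.le_gt_cases (q - d 0) j) as [Hjtop|Hjlow].
  - pose proof (revealed_level0 t (q - j) Ht ltac:(lia)) as H.
    replace (q - (q - j)) with j in H by lia. auto.
  - unfold out0. rewrite (proj2 (Nat.ltb_lt _ _) Ht), (proj2 (Nat.ltb_lt _ _) Hj).
    cbn [andb]. f_equal. apply map_ext_in. intros u Hu. apply in_seq in Hu.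
    unfold msg_of, shiftbit. destruct u as [|u].
    + simpl. destruct (Nat.leb_spec (q - d 0) j); auto. lia.
    + unfold g0. destruct (S (Datatypes.S u)) eqn:Es.
      * destruct (Nat.leb_spec (q - c (Datatypes.S u)) j); auto.
        pose proof (qmax_ge_c K d c (Datatypes.S u) ltac:(lia)).
        apply revealed_free; auto; try lia.
        unfold free_bits. apply in_app_iff; left. apply in_seq; lia.
      * rewrite (outside_agree (Datatypes.S u)); auto; lia.
Qed.

Lemma user0_agree : nth 0 a 0 = nth 0 b 0.
Proof.
  rewrite <- (decoded_correctly K d c N C a 0), <- (decoded_correctly K d c N C b 0);
    auto; try lia.
  rewrite receiver0_output_agree; auto.
Qed.

(** Invariant of the peeling: the bits of the users of [S] that land at or
    below level [q - L] of receiver 0 (and are seen by their own receiver)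
    agree. *)
Definition resolved (L : nat) : Prop :=
  forall u m, 1 <= u <= K -> S u = true -> m < d u -> m + L <= c u -> bit_agrees u m.

(** Levels beyond user 0's only contain free bits. *)
Lemma resolved_beyond (L : nat) : d 0 + 1 <= L -> resolved L.
Proof.
  intros HL u m Hu Hs Hm HmL. apply revealed_free; auto.
  unfold free_bits. apply in_app_iff; left. apply in_seq. lia.
Qed.

Definition contribution (w : list nat) (t j x : nat) : bool :=
  shiftbit (q - g0 d c x) (enc C x (msg_of w x) t) j.

Lemma other_contributions_agree (L h t x : nat) (rest : list nat) :
  1 <= L <= d 0 -> resolved (L + 1) -> interferers K d c S L = h :: rest ->
  t < N -> x <= K -> x <> h -> contribution a t (q - L) x = contribution b t (q - L) x.
Proof.
  intros HL Hres EU Ht Hx Hxh. unfold contribution, msg_of. destruct x as [|x].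
  { rewrite user0_agree; auto. }
  unfold g0. destruct (S (Datatypes.S x)) eqn:Esx.
  2:{ rewrite (outside_agree (Datatypes.S x)); auto; lia. }
  pose proof (qmax_ge_c K d c (Datatypes.S x) ltac:(lia)) as Hcx.
  unfold shiftbit. destruct (Nat.leb_spec (q - c (Datatypes.S x)) (q - L)); auto.
  replace (q - L - (q - c (Datatypes.S x))) with (c (Datatypes.S x) - L) by lia.
  destruct (inU d c L (Datatypes.S x)) eqn:Ei.
  - (* an interferer other than [h]: its bit is revealed *)
    apply (revealed_interferer L); auto. rewrite EU. simpl.
    assert (Hx2 : In (Datatypes.S x) (interferers K d c S L)).
    { apply filter_In. split; [apply in_seq; lia|]. rewrite Esx, Ei; auto. }
    rewrite EU in Hx2. destruct Hx2; [congruence | auto].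
  - (* not interfering at level [L]: its whole message is already resolved *)
    rewrite (decode_user K d c N C (Datatypes.S x) a b); auto; try lia.
    intros t' m' Ht' Hm'. apply Hres; auto; try lia.
    pose proof (qmax_ge_d0 K d c).
    unfold inU in Ei. apply Bool.andb_false_iff in Ei.
    destruct Ei as [Ei|Ei]; [apply Nat.ltb_ge in Ei | apply Nat.leb_gt in Ei]; lia.
Qed.

(** Peeling one level: at level [q - L] the first interferer is the only
    unknown contribution, so it is determined by the revealed output. *)
Lemma resolved_step (L : nat) : 1 <= L <= d 0 -> resolved (L + 1) -> resolved L.
Proof.
  intros HL Hres u m Hu Hs Hm HmL t Ht.
  destruct (Nat.le_gt_cases (m + (L + 1)) (c u)) as [Hlow|Hat]; [apply Hres; auto|].
  assert (Em : m = c u - L) by lia.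
  assert (HinU : In u (interferers K d c S L)).
  { apply filter_In. split; [apply in_seq; lia|].
    rewrite Hs. simpl. unfold inU. apply andb_true_intro.
    split; [apply Nat.ltb_lt | apply Nat.leb_le]; lia. }
  destruct (interferers K d c S L) as [|h rest] eqn:EU; [contradiction|].
  destruct HinU as [Eh|Hrest].
  2:{ rewrite Em. apply (revealed_interferer L); auto. rewrite EU. auto. }
  subst h.
  pose proof (qmax_ge_d0 K d c) as Hd0.
  pose proof (qmax_ge_c K d c u Hu) as Hcu.
  assert (Hc : contribution a t (q - L) u = contribution b t (q - L) u).
  { apply (xor_cancel _ _ (all_users K) u (seq_NoDup _ _)); [apply in_seq; lia| |].
    - intros x Hx Hne. apply in_seq in Hx.
      apply (other_contributions_agree L u t x rest); auto; lia.
    - pose proof (revealed_level0 t L Ht HL) as HY. unfold out0 in HY.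
      rewrite (proj2 (Nat.ltb_lt _ _) Ht), (proj2 (Nat.ltb_lt (q - L) q) ltac:(lia)) in HY.
      exact HY. }
  unfold contribution, msg_of, shiftbit in Hc. destruct u as [|u]; [lia|]. unfold g0 in Hc.
  rewrite (proj2 (Nat.leb_le (q - c (Datatypes.S u)) (q - L)) ltac:(lia)) in Hc.
  replace (q - L - (q - c (Datatypes.S u))) with m in Hc by lia. exact Hc.
Qed.

Lemma all_levels_resolved : resolved 1.
Proof.
  assert (H : forall n L, 1 <= L -> d 0 + 1 <= L + n -> resolved L).
  { induction n as [|n IH]; intros L H1 H2; [apply resolved_beyond; lia|].
    destruct (Nat.le_gt_cases (d 0 + 1) L); [apply resolved_beyond; lia|].
    apply resolved_step; [lia|]. apply IH; lia. }
  apply (H (d 0)); lia.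
Qed.

(** Every user of [S] is then decoded from its resolved and free bits. *)
Lemma sum_genie_injective : a = b.
Proof.
  apply (msgs_ext K C); auto. intros u Hu.
  destruct u as [|u]; [apply user0_agree|].
  destruct (S (Datatypes.S u)) eqn:Es; [|apply outside_agree; auto; lia].
  apply (decode_user K d c N C); auto; try lia. intros t m Ht Hm.
  destruct (Nat.le_gt_cases (c (Datatypes.S u)) m).
  - apply revealed_free; auto; try lia.
    unfold free_bits. apply in_app_iff; right. apply in_seq; lia.
  - apply all_levels_resolved; auto; lia.
Qed.

End SumGenie.

Lemma sum_genie (K : nat) (d c : nat -> nat) (S : nat -> bool) (N : nat) (C : Code) :
  genie_identifies K d c N C (with0 S) (sum_probes K d c S N).
Proof. intros a b; apply sum_genie_injective. Qed.

(** ** From counting to rates *)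

Open Scope R_scope.

Lemma Rpower2_pos (x : R) : 0 < Rpower 2 x.
Proof. unfold Rpower. apply exp_pos. Qed.

Lemma Rpower_rate_sum_le (f : nat -> nat) (r : nat -> R) (N : nat) (P : nat -> bool)
  (l : list nat) :
  (forall u, In u l -> Rpower 2 (INR N * r u) <= INR (f u)) ->
  Rpower 2 (INR N * fold_right Rplus 0 (map r (filter P l))) <=
  INR (prodl (map (fun u => if P u then f u else 1%nat) l)).
Proof.
  induction l as [|u l IH]; intros H; simpl.
  - rewrite Rmult_0_r, Rpower_O by lra. lra.
  - specialize (IH (fun x Hx => H x (or_intror Hx))).
    destruct (P u); simpl.
    + rewrite mult_INR, Rmult_plus_distr_l, Rpower_plus.
      apply Rmult_le_compat; try apply Rlt_le, Rpower2_pos; auto. apply H; left; auto.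
    + rewrite Nat.add_0_r. auto.
Qed.

Lemma rate_le_of_counting (R0 B : R) (p X : nat -> R) :
  Un_cv p 0 ->
  (forall N, Rpower 2 (INR N * R0) <= X N) ->
  (forall N, X N * (1 - p N) <= Rpower 2 (INR N * B)) ->
  R0 <= B.
Proof.
  intros Hcv Hlow Hup. destruct (Rle_or_lt R0 B) as [|Hlt]; auto. exfalso.
  destruct (Hcv (/2) ltac:(lra)) as [N0 HN0].
  destruct (INR_archimed (R0 - B) 1 ltac:(lra)) as [n Hn].
  set (N := (N0 + n)%nat).
  assert (HnN : INR n <= INR N) by (apply le_INR; unfold N; lia).
  specialize (HN0 N ltac:(unfold N; lia)). unfold R_dist in HN0.
  rewrite Rminus_0_r in HN0. apply Rabs_def2 in HN0.
  specialize (Hlow N). specialize (Hup N). pose proof (Rpower2_pos (INR N * R0)) as Hpos.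
  assert (Hpow : Rpower 2 (INR N * R0) <= Rpower 2 (INR N * B + 1)).
  { rewrite Rpower_plus, Rpower_1 by lra. nra. }
  assert (Hexp : INR N * R0 <= INR N * B + 1).
  { destruct (Rle_or_lt (INR N * R0) (INR N * B + 1)) as [|Hgt]; auto.
    pose proof (Rpower_lt 2 _ _ ltac:(lra) Hgt). lra. }
  nra.
Qed.

Lemma msz_ge1 (K : nat) (code : nat -> Code) (r : nat -> R) (N : nat) :
  (forall N i, (i <= K)%nat -> Rpower 2 (INR N * r i) <= INR (msz (code N) i)) ->
  forall u, (u <= K)%nat -> (1 <= msz (code N) u)%nat.
Proof.
  intros H u Hu. specialize (H N u Hu). pose proof (Rpower2_pos (INR N * r u)).
  assert (INR 0 < INR (msz (code N) u)) by (simpl; lra). apply INR_lt in H1. lia.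
Qed.

Lemma achievable_genie_rate (K : nat) (d c : nat -> nat) (r : nat -> R) (P : nat -> bool)
  (I : nat -> list probe) (B : nat) :
  achievable K d c r ->
  (forall N C, genie_identifies K d c N C P (I N)) ->
  (forall N, length (I N) = (N * B)%nat) ->
  fold_right Rplus 0 (map r (filter P (all_users K))) <= INR B.
Proof.
  intros [_ [code [Hm Hcv]]] Hgenie Hlen.
  apply (rate_le_of_counting _ _ (fun N => Perr K d c N (code N))
           (fun N => INR (inside_size P K (code N)))); auto.
  - intros N. apply Rpower_rate_sum_le. intros u Hu. apply Hm. apply in_seq in Hu. lia.
  - intros N. rewrite <- mult_INR, Rpower_pow by lra. rewrite <- Hlen.
    apply genie_bound; auto. apply (msz_ge1 K code r N Hm).
Qed.

Lemma achievable_individual (K : nat) (d c : nat -> nat) (r : nat -> R) (i : nat) :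
  (i <= K)%nat -> achievable K d c r -> r i <= INR (d i).
Proof.
  intros Hi Hach.
  pose proof (achievable_genie_rate K d c r (fun u => u =? i)%nat (fun N => own_bits d N i)
                (d i) Hach (fun N C => own_bits_genie K d c N C i Hi)
                (fun N => own_bits_length d N i)) as H.
  rewrite filter_eqb_single in H by (apply seq_NoDup || (apply in_seq; lia)).
  simpl in H. lra.
Qed.

Lemma achievable_sum (K : nat) (d c : nat -> nat) (r : nat -> R) (S : nat -> bool) :
  achievable K d c r -> r O + rate_sum K S r <= INR (ffree K d c S + sum_fk K d c S).
Proof.
  intros Hach.
  pose proof (achievable_genie_rate K d c r (with0 S) (sum_probes K d c S) _ Hach
                (sum_genie K d c S) (sum_probes_length K d c S)) as H.
  assert (Ef : filter (with0 S) (all_users K) = (0%nat :: filter S (users K))).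
  { unfold all_users. simpl. f_equal. apply filter_ext_in. intros u Hu. apply in_seq in Hu.
    unfold with0. destruct u; [lia | auto]. }
  rewrite Ef in H. exact H.
Qed.

(** ** Passing to the closure *)

Lemma le_of_forall_eps (x B k : R) : 0 <= k -> (forall eps, 0 < eps -> x <= B + k * eps) ->
  x <= B.
Proof.
  intros Hk H. destruct (Rle_or_lt x B) as [|Hlt]; auto.
  assert (Hpos : 0 < (x - B) / (k + 1)) by (apply Rdiv_lt_0_compat; lra).
  specialize (H _ Hpos).
  assert (k * ((x - B) / (k + 1)) < x - B).
  { unfold Rdiv. rewrite <- Rmult_assoc. apply Rmult_lt_reg_r with (k + 1); [lra|].
    rewrite Rmult_assoc, Rinv_l by lra. nra. }
  lra.
Qed.

Lemma sum_le_perturbed (r r' : nat -> R) (eps : R) (l : list nat) :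
  (forall u, In u l -> r u <= r' u + eps) ->
  fold_right Rplus 0 (map r l) <= fold_right Rplus 0 (map r' l) + INR (length l) * eps.
Proof.
  induction l as [|u l IH]; cbn [map fold_right length]; intros H; [simpl; lra|].
  rewrite S_INR. specialize (IH (fun x Hx => H x (or_intror Hx))).
  specialize (H u (or_introl eq_refl)). lra.
Qed.

Lemma capacity_region_approx (K : nat) (d c : nat -> nat) (r : nat -> R) :
  capacity_region K d c r -> forall eps, 0 < eps ->
  exists r', achievable K d c r' /\
    forall i, (i <= K)%nat -> r i <= r' i + eps /\ r' i <= r i + eps.
Proof.
  intros Hcap eps He. destruct (Hcap eps He) as [r' [Ha Hcl]]. exists r'. split; auto.
  intros i Hi. specialize (Hcl i Hi). apply Rabs_def2 in Hcl. lra.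
Qed.

Theorem lemma1 (K : nat) (d c : nat -> nat) (r : nat -> R) :
  capacity_region K d c r -> outer_region K d c r.
Proof.
  intros Hcap. pose proof (capacity_region_approx K d c r Hcap) as Hclose.
  split.
  - intros i Hi. split.
    + apply Rnot_lt_le. intros Hneg.
      destruct (Hclose (- r i / 2) ltac:(lra)) as [r' [[Hnn _] Hcl]].
      specialize (Hnn i Hi). specialize (Hcl i Hi). lra.
    + apply (le_of_forall_eps _ _ 1); [lra|]. intros eps He.
      destruct (Hclose eps He) as [r' [Ha Hcl]].
      pose proof (achievable_individual K d c r' i Hi Ha). specialize (Hcl i Hi). lra.
  - intros S _. apply (le_of_forall_eps _ _ (INR K + 1)); [pose proof (pos_INR K); lra|].
    intros eps He. destruct (Hclose eps He) as [r' [Ha Hcl]].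
    pose proof (achievable_sum K d c r' S Ha).
    assert (H0 : r 0%nat <= r' 0%nat + eps) by (apply Hcl; lia).
    assert (Hs := sum_le_perturbed r r' eps (filter S (users K)) ltac:(
      intros u Hu; apply filter_In in Hu; destruct Hu as [Hu _]; apply in_seq in Hu;
      apply Hcl; lia)).
    assert (Hl : INR (length (filter S (users K))) <= INR K).
    { apply le_INR. etransitivity; [apply filter_length_le|]. unfold users.
      rewrite length_seq; lia. }
    unfold rate_sum in *. nra.
Qed.
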